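(* (a) For $n\ge 2$ and $1\le d\le n$, in $B_n$: $$[1,n]^d=[d,1]\,[1,n]\,[1,n-1]^{d-1}\quad\text{and}\quad [n,1]^d=[n-1,1]^{d-1}\,[n,1]\,[1,d].$$ (b) Let $1\le\rho\le m$, $x\ge 0$, $m+x\ge 2$, and $\gamma\in B_m$, where $B_m\subseteq B_{m+x}$ via the standard inclusion. Then $$\widehat{\gamma[1,m+x]^{\rho}}=\widehat{\gamma[\rho,1]^x[1,m]^{\rho}}\quad\text{and}\quad\widehat{\gamma[m+x,1]^{\rho}}=\widehat{\gamma[m,1]^{\rho}[1,\rho]^x},$$ where the left sides are closures in $B_{m+x}$ and the right sides are closures in $B_m$. (c) For T-links: $T((m,y),(n,\rho))=\widehat{[\rho,1]^{n-m}[1,m]^{\rho+y}}$ for $2\le\rho\le m\le n$ and $1\le y$; $T((2,y),(n,\rho))=T((2,y),(\rho,n))$ for $2\le\rho,n$ and $1\le y$; $T((m,y),(n,m))=T(m,n+y)$ for $2\le m<n$ with $n\equiv 0\pmod m$ (and $y\ge 1$).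
   Context: $B_n$ is the braid group on $n$ strands with standard generators $\sigma_1,\dots,\sigma_{n-1}$; $\widehat\beta$ denotes the closure. For $a<b$, $[a,b]=\sigma_a\sigma_{a+1}\cdots\sigma_{b-1}$; for $a>b$, $[a,b]=\sigma_{a-1}\sigma_{a-2}\cdots\sigma_b$; $[a,a]=1$. A T-link $T((r_1,s_1),\dots,(r_k,s_k))$, with integers $2\le r_1\le\dots\le r_k$ and $s_i>0$, is the closure of $[1,r_1]^{s_1}\cdots[1,r_k]^{s_k}\in B_{r_k}$; the torus link $T(m,n)$ is $T((m,n))$, the closure of $[1,m]^n\in B_m$. *)

From mathcomp Require Import all_boot.
From Stdlib Require Import Relation_Operators.
Set Implicit Arguments. Unset Strict Implicit. Unset Printing Implicit Defensive.

(* A braid word: a letter (i, true) is sigma_i, (i, false) is sigma_i^{-1}. *)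
Definition letter := (nat * bool)%type.
Definition bword := seq letter.

Definition valid (n : nat) (w : bword) : bool :=
  all (fun l : letter => (1 <= l.1) && (l.1 < n)) w.

Inductive braid_rel (n : nat) : bword -> bword -> Prop :=
| br_free i b : 1 <= i -> i < n -> braid_rel n [:: (i, b); (i, ~~ b)] [::]
| br_far i j : 1 <= i -> i.+1 < j -> j < n ->
    braid_rel n [:: (i, true); (j, true)] [:: (j, true); (i, true)]
| br_braid i : 1 <= i -> i.+1 < n ->
    braid_rel n [:: (i, true); (i.+1, true); (i, true)]
                [:: (i.+1, true); (i, true); (i.+1, true)].

Inductive braid_step (n : nat) : bword -> bword -> Prop :=
| bs_step u v l r : braid_rel n l r -> braid_step n (u ++ l ++ v) (u ++ r ++ v).

Definition braid_eq (n : nat) : bword -> bword -> Prop :=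
  clos_refl_sym_trans bword (braid_step n).

Definition seg (a b : nat) : bword :=
  if a < b then [seq (i, true) | i <- iota a (b - a)]
  else rev [seq (i, true) | i <- iota b (a - b)].

Definition wpow (w : bword) (k : nat) : bword := flatten (nseq k w).

(* Equality of closures: (n, w) and (n', w') have the same closure (as
   oriented links).  Realized combinatorially via Markov moves
   (Markov's theorem): braid equality, conjugation, stabilization. *)
Inductive closure_eq : nat -> bword -> nat -> bword -> Prop :=
| ce_braid n w w' : 1 <= n -> valid n w -> valid n w' -> braid_eq n w w' ->
    closure_eq n w n w'
| ce_conj n u w : 1 <= n -> valid n u -> valid n w ->
    closure_eq n (u ++ w) n (w ++ u)
| ce_stab n w b : 1 <= n -> valid n w ->
    closure_eq n w n.+1 (w ++ [:: (n, b)])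
| ce_sym n w n' w' : closure_eq n w n' w' -> closure_eq n' w' n w
| ce_trans n w n' w' n'' w'' : closure_eq n w n' w' -> closure_eq n' w' n'' w'' ->
    closure_eq n w n'' w''.

(* T-link T((r_1,s_1),...,(r_k,s_k)) as a braid word in B_{r_k}. *)
Definition tword (ps : seq (nat * nat)) : bword :=
  flatten [seq wpow (seg 1 p.1) p.2 | p <- ps].
Definition tstrands (ps : seq (nat * nat)) : nat := (last (0, 0) ps).1.
Definition tlink_eq (ps qs : seq (nat * nat)) : Prop :=
  closure_eq (tstrands ps) (tword ps) (tstrands qs) (tword qs).

(* Everything rests on the conjugation rule [1,N] w = w' [1,N], where w' raises
   every generator index of a positive word w in sigma_1..sigma_{N-2} by one;
   with [1,N]^2 = sigma_1 [1,N] [1,N-1] it gives (a) by induction on d.  In (b),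
   (a) with d = rho makes the braid end in sigma_{m+x-1}, which a conjugation and
   a Markov destabilisation remove, lowering x by one.  Part (c) follows from (b),
   the full twist identity [1,k]^k = [k,1]^k, and, for T((2,y),(n,rho)),
   conjugation by the half twist, which sends sigma_i to sigma_{k-i} and so
   exchanges [k,1] and [1,k]. *)

From mathcomp Require Import all_boot zify.
From Stdlib Require Import Relation_Operators.
Set Implicit Arguments. Unset Strict Implicit. Unset Printing Implicit Defensive.

Lemma braid_eq_refl n w : braid_eq n w w.
Proof. exact: rst_refl. Qed.

Lemma braid_eq_sym n u v : braid_eq n u v -> braid_eq n v u.
Proof. exact: rst_sym. Qed.

Lemma braid_eq_trans n u v w : braid_eq n u v -> braid_eq n v w -> braid_eq n u w.
Proof. exact: rst_trans. Qed.

Lemma braid_eq_rel n l r : braid_rel n l r -> braid_eq n l r.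
Proof. move=> H; apply: rst_step; have := bs_step [::] [::] H; by rewrite /= !cats0. Qed.

Lemma braid_eq_lift n n' (f : bword -> bword) :
  (forall u v, braid_step n u v -> braid_eq n' (f u) (f v)) ->
  forall u v, braid_eq n u v -> braid_eq n' (f u) (f v).
Proof.
move=> hf u v; elim=> [x y /hf //|x|x y _ IH|x y z _ IH1 _ IH2].
- exact: braid_eq_refl.
- exact: braid_eq_sym.
- exact: braid_eq_trans IH1 IH2.
Qed.

Lemma braid_eq_ctx n a b u v :
  braid_eq n u v -> braid_eq n (a ++ u ++ b) (a ++ v ++ b).
Proof.
apply: (braid_eq_lift (f := fun w => a ++ w ++ b)) => _ _ [u0 v0 l r H].
apply: rst_step; have := bs_step (a ++ u0) (v0 ++ b) H; by rewrite -!catA.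
Qed.

Lemma braid_eq_catl n a u v : braid_eq n u v -> braid_eq n (a ++ u) (a ++ v).
Proof. move=> H; have := braid_eq_ctx a [::] H; by rewrite !cats0. Qed.

Lemma braid_eq_catr n b u v : braid_eq n u v -> braid_eq n (u ++ b) (v ++ b).
Proof. move=> H; exact: (braid_eq_ctx [::] b H). Qed.

Lemma braid_eq_cat n u v u' v' :
  braid_eq n u v -> braid_eq n u' v' -> braid_eq n (u ++ u') (v ++ v').
Proof. move=> H1 H2; exact: braid_eq_trans (braid_eq_catr _ H1) (braid_eq_catl _ H2). Qed.

Lemma braid_eq_widen n n' u v : n <= n' -> braid_eq n u v -> braid_eq n' u v.
Proof.
move=> le; apply: (braid_eq_lift (f := id)) => _ _ [u0 v0 l r H].
apply: rst_step; apply: bs_step.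
case: H => [i b h1 h2|i j h1 h2 h3|i h1 h2].
- apply: br_free => //; lia.
- apply: br_far => //; lia.
- apply: br_braid => //; lia.
Qed.

Lemma braid_eq_rev n u v : braid_eq n u v -> braid_eq n (rev u) (rev v).
Proof.
apply: (braid_eq_lift (f := rev)) => _ _ [u0 v0 l r H].
rewrite !rev_cat -!catA; apply: braid_eq_ctx.
case: H => [i b h1 h2|i j h1 h2 h3|i h1 h2].
- apply: braid_eq_rel; have := @br_free n i (~~ b) h1 h2; by rewrite negbK.
- apply: braid_eq_sym; apply: braid_eq_rel; exact: br_far.
- apply: braid_eq_rel; exact: br_braid.
Qed.

Definition sig i : letter := (i, true).

Definition up a k : bword := [seq sig j | j <- iota a k].

Lemma upS a k : up a k.+1 = sig a :: up a.+1 k.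
Proof. by []. Qed.

Lemma up_cat a k1 k2 : up a (k1 + k2) = up a k1 ++ up (a + k1) k2.
Proof. by rewrite /up iotaD map_cat. Qed.

Lemma upSr a k : up a k.+1 = up a k ++ [:: sig (a + k)].
Proof. by rewrite -addn1 up_cat. Qed.

Lemma seg_up a b : a <= b -> seg a b = up a (b - a).
Proof. rewrite /seg leq_eqVlt => /orP [/eqP->|->] //. by rewrite ltnn subnn. Qed.

Lemma seg_down a b : b <= a -> seg a b = rev (up b (a - b)).
Proof. by rewrite /seg ltnNge => ->. Qed.

Lemma rev_seg a b : rev (seg a b) = seg b a.
Proof.
case: (leqP a b) => h; first by rewrite (seg_down h) (seg_up h).
by rewrite (seg_up (ltnW h)) (seg_down (ltnW h)) revK.
Qed.

Lemma seg1S M : 1 <= M -> seg 1 M.+1 = seg 1 M ++ [:: sig M].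
Proof.
move=> h; rewrite !seg_up //; try lia.
have -> : M.+1 - 1 = (M - 1).+1 by lia.
rewrite upSr; congr (_ ++ [:: sig _]); lia.
Qed.

Lemma segS1 M : 1 <= M -> seg M.+1 1 = sig M :: seg M 1.
Proof. by move=> h; rewrite -rev_seg seg1S // rev_cat rev_seg. Qed.

Lemma wpowS w k : wpow w k.+1 = w ++ wpow w k.
Proof. by []. Qed.

Lemma wpowD w a b : wpow w (a + b) = wpow w a ++ wpow w b.
Proof. elim: a => // a IH. by rewrite addSn !wpowS IH catA. Qed.

Lemma wpowSr w k : wpow w k.+1 = wpow w k ++ w.
Proof. by rewrite -addn1 wpowD /wpow /= cats0. Qed.

Lemma wpowM w a b : wpow w (a * b) = wpow (wpow w a) b.
Proof. elim: b => [|b IH]; first by rewrite muln0. by rewrite mulnS wpowD IH. Qed.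

Lemma rev_wpow w k : rev (wpow w k) = wpow (rev w) k.
Proof. elim: k => [|k IH] //. by rewrite wpowS rev_cat IH -wpowSr. Qed.

Lemma map_wpow (f : letter -> letter) w k : map f (wpow w k) = wpow (map f w) k.
Proof. elim: k => //= k IH; by rewrite map_cat IH. Qed.

Lemma braid_eq_wpow n u v k : braid_eq n u v -> braid_eq n (wpow u k) (wpow v k).
Proof. move=> H; elim: k => [|k IH]; [exact: braid_eq_refl | exact: braid_eq_cat]. Qed.

Definition pos_word lo hi (w : bword) : bool :=
  all (fun l : letter => l.2 && (lo <= l.1) && (l.1 < hi)) w.

Lemma pos_word_cat lo hi u v : pos_word lo hi (u ++ v) = pos_word lo hi u && pos_word lo hi v.
Proof. exact: all_cat. Qed.

Lemma pos_word_rev lo hi u : pos_word lo hi (rev u) = pos_word lo hi u.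
Proof. exact: all_rev. Qed.

Lemma pos_word_wpow lo hi u k : pos_word lo hi u -> pos_word lo hi (wpow u k).
Proof. move=> h; elim: k => //= k IH; by rewrite pos_word_cat h. Qed.

Lemma pos_word_widen lo hi lo' hi' w :
  lo' <= lo -> hi <= hi' -> pos_word lo hi w -> pos_word lo' hi' w.
Proof.
move=> h1 h2; apply: sub_all => l /andP [/andP [-> h3] h4] /=.
apply/andP; split; [exact: leq_trans h1 h3 | exact: leq_trans h4 h2].
Qed.

Lemma pos_word_up lo hi a k : lo <= a -> a + k <= hi -> pos_word lo hi (up a k).
Proof.
move=> h1 h2; rewrite /pos_word all_map; apply/allP => j; rewrite mem_iota /= => /andP [h h'].
apply/andP; split; [exact: leq_trans h1 h | exact: leq_trans h' h2].
Qed.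

Lemma pos_word_seg lo hi a b :
  lo <= a -> lo <= b -> a <= hi -> b <= hi -> pos_word lo hi (seg a b).
Proof.
move=> h1 h2 h3 h4; case: (leqP a b) => h.
- rewrite seg_up //; apply: pos_word_up => //; lia.
- rewrite seg_down ?pos_word_rev; last lia. apply: pos_word_up => //; lia.
Qed.

Lemma pos_word_sig lo hi i : lo <= i < hi -> pos_word lo hi [:: sig i].
Proof. by rewrite /pos_word /= andbT. Qed.

Lemma valid_cat n u v : valid n (u ++ v) = valid n u && valid n v.
Proof. exact: all_cat. Qed.

Lemma valid_wpow n u k : valid n u -> valid n (wpow u k).
Proof. move=> h; elim: k => //= k IH; by rewrite valid_cat h. Qed.

Lemma valid_widen n n' u : n <= n' -> valid n u -> valid n' u.
Proof. move=> le; apply: sub_all => l /andP [h1 h2]; apply/andP; split => //; lia. Qed.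

Lemma pos_word_valid n w : pos_word 1 n w -> valid n w.
Proof. apply: sub_all => l /andP [/andP [_ h1] h2]; by rewrite h1 h2. Qed.

Lemma valid_seg n a b : 1 <= a -> 1 <= b -> a <= n -> b <= n -> valid n (seg a b).
Proof. by move=> *; apply/pos_word_valid/pos_word_seg. Qed.

Ltac valid_tac := repeat match goal with
 | |- is_true (valid _ (_ ++ _)) => rewrite valid_cat; apply/andP; split
 | |- is_true (valid _ (wpow _ _)) => apply: valid_wpow
 | |- is_true (valid _ (seg _ _)) => apply: valid_seg; lia
 | |- is_true (valid _ [:: _]) => rewrite /valid /sig /= ?andbT; try (apply/andP; split); lia
 | H : is_true (valid ?m ?g) |- is_true (valid _ ?g) => apply: (valid_widen _ H); lia
 | |- is_true (0 < _) => lia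
 end.

Definition shift (l : letter) : letter := (l.1.+1, l.2).

Lemma map_shift_up a k : map shift (up a k) = up a.+1 k.
Proof. elim: k a => //= k IH a. by rewrite IH. Qed.

Lemma far_comm n j lo hi w : 1 <= j < n -> 1 <= lo -> hi <= n ->
  (hi < j) || (j.+1 < lo) -> pos_word lo hi w ->
  braid_eq n (w ++ [:: sig j]) (sig j :: w).
Proof.
move=> /andP [hj1 hj2] hlo hhi hfar.
elim: w => [|[i b] w IH] /=; first by move=> _; exact: braid_eq_refl.
case/andP=> /andP [/andP [hb hi1] hi2] hw; case: b hb => // _.
apply: (braid_eq_trans (v := sig i :: sig j :: w)); first exact: (braid_eq_catl [:: sig i] (IH hw)).
have := @braid_eq_ctx n [::] w [:: sig i; sig j] [:: sig j; sig i]; apply.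
case/orP: hfar => hfar; first by apply: braid_eq_rel; apply: br_far; lia.
by apply: braid_eq_sym; apply: braid_eq_rel; apply: br_far; lia.
Qed.

Lemma seg1_sig N i : 1 <= i -> i.+1 < N ->
  braid_eq N (seg 1 N ++ [:: sig i]) (sig i.+1 :: seg 1 N).
Proof.
move=> h1 h2.
have -> : seg 1 N = up 1 i.-1 ++ [:: sig i; sig i.+1] ++ up i.+2 (N - i.+2).
  rewrite seg_up; last lia.
  have -> : N - 1 = i.-1 + (2 + (N - i.+2)) by lia.
  rewrite !up_cat; congr (_ ++ _).
  have -> : 1 + i.-1 = i by lia.
  by rewrite addn2.
set A := up 1 i.-1; set C := up i.+2 (N - i.+2).
have pA : pos_word 1 i A by apply: pos_word_up; lia.
have pC : pos_word i.+2 N C by apply: pos_word_up; lia.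
apply: (braid_eq_trans (v := A ++ [:: sig i; sig i.+1; sig i] ++ C)).
  rewrite -!catA; do 2 apply: braid_eq_catl.
  apply: (far_comm (lo := i.+2) (hi := N)) => //; lia.
apply: (braid_eq_trans (v := (A ++ [:: sig i.+1]) ++ [:: sig i; sig i.+1] ++ C)).
  rewrite -catA; apply: braid_eq_catl.
  have := @braid_eq_ctx N [::] C [:: sig i; sig i.+1; sig i] [:: sig i.+1; sig i; sig i.+1].
  by apply; apply: braid_eq_rel; apply: br_braid.
apply: (@braid_eq_catr N _ (A ++ [:: sig i.+1]) (sig i.+1 :: A)).
apply: (far_comm (lo := 1) (hi := i)) => //; lia.
Qed.

Lemma seg1_conj N w : pos_word 1 N.-1 w ->
  braid_eq N (seg 1 N ++ w) (map shift w ++ seg 1 N).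
Proof.
elim: w => [|[i b] w IH] /=; first by move=> _; rewrite cats0; exact: braid_eq_refl.
case/andP=> /andP [/andP [hb hi1] hi2] hw; case: b hb => // _.
apply: (braid_eq_trans (v := (sig i.+1 :: seg 1 N) ++ w)).
  have -> : seg 1 N ++ (i, true) :: w = (seg 1 N ++ [:: sig i]) ++ w by rewrite -catA.
  apply: braid_eq_catr; apply: seg1_sig => //; lia.
exact: (braid_eq_catl [:: sig i.+1] (IH hw)).
Qed.

Lemma segN1_conj N w : pos_word 1 N.-1 w ->
  braid_eq N (w ++ seg N 1) (seg N 1 ++ map shift w).
Proof.
rewrite -pos_word_rev => /seg1_conj/braid_eq_rev.
by rewrite !rev_cat revK map_rev revK rev_seg.
Qed.

Lemma seg1_sqr N : 2 <= N ->
  braid_eq N (seg 1 N ++ seg 1 N) (sig 1 :: seg 1 N ++ seg 1 N.-1).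
Proof.
move=> hN; apply: braid_eq_sym.
have e : seg 1 N = sig 1 :: map shift (seg 1 N.-1).
  rewrite !seg_up ?map_shift_up; try lia.
  by have -> : N - 1 = (N.-1 - 1).+1 by lia.
rewrite {2}e; apply: (braid_eq_catl [:: sig 1]).
apply: seg1_conj; apply: pos_word_seg; lia.
Qed.

Lemma seg1_pow N d : 2 <= N -> d < N ->
  braid_eq N (wpow (seg 1 N) d.+1) (seg d.+1 1 ++ seg 1 N ++ wpow (seg 1 N.-1) d).
Proof.
move=> hN; elim: d => [|d IH] hd.
  by rewrite (seg_down (a := 1) (b := 1)) //= /wpow /= cats0; exact: braid_eq_refl.
set w := seg 1 N; set W := wpow (seg 1 N.-1) d.
apply: (braid_eq_trans (v := w ++ (seg d.+1 1 ++ w ++ W))).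
  rewrite wpowS; apply: braid_eq_catl; apply: IH; lia.
apply: (braid_eq_trans (v := (map shift (seg d.+1 1) ++ w) ++ w ++ W)).
  rewrite catA; apply: braid_eq_catr; apply: seg1_conj; apply: pos_word_seg; lia.
have -> : map shift (seg d.+1 1) = rev (up 2 d) by rewrite seg_down // map_rev map_shift_up subn1.
apply: (braid_eq_trans (v := rev (up 2 d) ++ (sig 1 :: w ++ seg 1 N.-1) ++ W)).
  rewrite -catA (catA w w W); apply: braid_eq_catl; apply: braid_eq_catr; exact: seg1_sqr.
have -> : seg d.+2 1 = rev (up 1 d.+1) by rewrite seg_down.
rewrite upS rev_cons -cats1 wpowS -!catA /= -catA; exact: braid_eq_refl.
Qed.

Lemma segN1_pow N d : 2 <= N -> d < N ->
  braid_eq N (wpow (seg N 1) d.+1) (wpow (seg N.-1 1) d ++ seg N 1 ++ seg 1 d.+1).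
Proof.
move=> h1 h2; have := braid_eq_rev (seg1_pow h1 h2).
by rewrite rev_wpow rev_seg !rev_cat rev_wpow !rev_seg catA.
Qed.

Lemma closure_eq_refl n w : 1 <= n -> valid n w -> closure_eq n w n w.
Proof. by move=> h1 h2; apply: ce_braid => //; exact: braid_eq_refl. Qed.

Lemma closure_eq_conjE n a b u w : 1 <= n -> valid n u -> valid n w ->
  a = u ++ w -> b = w ++ u -> closure_eq n a n b.
Proof. move=> h1 h2 h3 -> ->; exact: ce_conj. Qed.

Lemma closure_eq_destab n w b : 1 <= n -> valid n w -> closure_eq n.+1 (w ++ [:: (n, b)]) n w.
Proof. by move=> h1 h2; apply: ce_sym; exact: ce_stab. Qed.

Lemma closure_seg1_pow rho m x gamma : 1 <= rho <= m -> valid m gamma ->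
  closure_eq (m + x) (gamma ++ wpow (seg 1 (m + x)) rho)
             m (gamma ++ wpow (seg rho 1) x ++ wpow (seg 1 m) rho).
Proof.
case: rho => // r /andP [_ hrm].
elim: x gamma => [|x IH] gamma hg.
  by rewrite addn0 /=; apply: closure_eq_refl; valid_tac.
rewrite addnS; set M := m + x.
have hM : 1 <= M by lia.
have hmM : m <= M by rewrite /M; lia.
apply: (ce_trans (n' := M.+1) (w' := gamma ++ seg r.+1 1 ++ seg 1 M.+1 ++ wpow (seg 1 M) r)).
  apply: ce_braid => //; try valid_tac.
  apply: braid_eq_catl; apply: seg1_pow; lia.
apply: (ce_trans (n' := M.+1) (w' := (wpow (seg 1 M) r ++ gamma ++ seg r.+1 1 ++ seg 1 M) ++ [:: sig M])).
  apply: (closure_eq_conjE (u := gamma ++ seg r.+1 1 ++ seg 1 M ++ [:: sig M]) (w := wpow (seg 1 M) r));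
    try valid_tac; by rewrite ?seg1S // -?catA.
apply: (ce_trans (closure_eq_destab _ _ _)); try valid_tac.
apply: (ce_trans (n' := M) (w' := (gamma ++ seg r.+1 1) ++ wpow (seg 1 M) r.+1)).
  apply: (closure_eq_conjE (u := wpow (seg 1 M) r) (w := gamma ++ seg r.+1 1 ++ seg 1 M)); try valid_tac;
    by rewrite ?wpowS -?catA.
apply: ce_trans (IH _ _) _; first valid_tac.
by rewrite wpowS -!catA; apply: closure_eq_refl; valid_tac.
Qed.

Lemma closure_segN1_pow rho m x gamma : 1 <= rho <= m -> valid m gamma ->
  closure_eq (m + x) (gamma ++ wpow (seg (m + x) 1) rho)
             m (gamma ++ wpow (seg m 1) rho ++ wpow (seg 1 rho) x).
Proof.
case: rho => // r /andP [_ hrm].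
elim: x gamma => [|x IH] gamma hg.
  by rewrite addn0 /= cats0; apply: closure_eq_refl; valid_tac.
rewrite addnS; set M := m + x.
have hM : 1 <= M by lia.
have hmM : m <= M by rewrite /M; lia.
apply: (ce_trans (n' := M.+1) (w' := gamma ++ wpow (seg M 1) r ++ seg M.+1 1 ++ seg 1 r.+1)).
  apply: ce_braid => //; try valid_tac.
  apply: braid_eq_catl; apply: segN1_pow; lia.
apply: (ce_trans (n' := M.+1)
          (w' := (seg M 1 ++ seg 1 r.+1 ++ gamma ++ wpow (seg M 1) r) ++ [:: sig M])).
  apply: (closure_eq_conjE (u := gamma ++ wpow (seg M 1) r ++ [:: sig M])
                           (w := seg M 1 ++ seg 1 r.+1)); try valid_tac;
    by rewrite ?segS1 // -?catA.
apply: (ce_trans (closure_eq_destab _ _ _)); try valid_tac.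
apply: (ce_trans (n' := M) (w' := (seg 1 r.+1 ++ gamma) ++ wpow (seg M 1) r.+1)).
  apply: (closure_eq_conjE (u := seg M 1) (w := seg 1 r.+1 ++ gamma ++ wpow (seg M 1) r));
    try valid_tac; by rewrite ?wpowSr -?catA.
apply: ce_trans (IH _ _) _; first valid_tac.
apply: (closure_eq_conjE (u := seg 1 r.+1)
                         (w := gamma ++ wpow (seg m 1) r.+1 ++ wpow (seg 1 r.+1) x));
  try valid_tac; by rewrite ?wpowSr -?catA.
Qed.

Lemma loop_comm N w : pos_word 1 N.-1 w ->
  braid_eq N (seg N 1 ++ seg 1 N ++ w) (w ++ seg N 1 ++ seg 1 N).
Proof.
move=> hw; apply: (braid_eq_trans (v := seg N 1 ++ map shift w ++ seg 1 N)).
  by apply: braid_eq_catl; exact: seg1_conj.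
rewrite catA (catA w); apply: braid_eq_catr; apply: braid_eq_sym; exact: segN1_conj.
Qed.

Lemma full_twist k : 1 <= k -> braid_eq k (wpow (seg 1 k) k) (wpow (seg k 1) k).
Proof.
case: k => // k _; elim: k => [|k IH].
  by rewrite (seg_down (a := 1) (b := 1)) //; exact: braid_eq_refl.
apply: (braid_eq_trans (v := seg k.+2 1 ++ seg 1 k.+2 ++ wpow (seg 1 k.+1) k.+1)).
  apply: seg1_pow; lia.
apply: (braid_eq_trans (v := seg k.+2 1 ++ seg 1 k.+2 ++ wpow (seg k.+1 1) k.+1)).
  by do 2 apply: braid_eq_catl; apply: (braid_eq_widen _ IH).
apply: (braid_eq_trans (v := wpow (seg k.+1 1) k.+1 ++ seg k.+2 1 ++ seg 1 k.+2)).
  by apply: loop_comm; apply: pos_word_wpow; apply: pos_word_seg.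
apply: braid_eq_sym; apply: segN1_pow; lia.
Qed.

Definition inv (w : bword) : bword := rev (map (fun l : letter => (l.1, ~~ l.2)) w).

Lemma inv_cons a w : inv (a :: w) = inv w ++ [:: (a.1, ~~ a.2)].
Proof. by rewrite /inv /= rev_cons cats1. Qed.

Lemma valid_inv n w : valid n (inv w) = valid n w.
Proof. by rewrite /inv /valid all_rev all_map. Qed.

Lemma braid_eq_mulV n w : valid n w -> braid_eq n (w ++ inv w) [::].
Proof.
elim: w => [|[i b] w IH] /=; first by move=> _; exact: braid_eq_refl.
case/andP=> /andP [h1 h2] hw; rewrite inv_cons.
apply: (braid_eq_trans (v := [:: (i, b)] ++ [::] ++ [:: (i, ~~ b)])).
  by rewrite catA; exact: (braid_eq_ctx [:: (i, b)] [:: (i, ~~ b)] (IH hw)).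
by apply: braid_eq_rel; exact: br_free.
Qed.

Lemma braid_eq_Vmul n w : valid n w -> braid_eq n (inv w ++ w) [::].
Proof.
elim: w => [|[i b] w IH] /=; first by move=> _; exact: braid_eq_refl.
case/andP=> /andP [h1 h2] hw; rewrite inv_cons.
apply: (braid_eq_trans (v := inv w ++ [::] ++ w)); last exact: IH.
rewrite -catA; apply: (@braid_eq_ctx n (inv w) w [:: (i, ~~ b); (i, b)] [::]).
by have := @br_free n i (~~ b) h1 h2; rewrite negbK; exact: braid_eq_rel.
Qed.

Fixpoint half_twist k : bword := if k is k'.+1 then seg 1 k ++ half_twist k' else [::].

Lemma pos_word_half_twist k : pos_word 1 k (half_twist k).
Proof.
elim: k => //= k IH; rewrite pos_word_cat pos_word_seg //=.
exact: pos_word_widen IH.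
Qed.

Lemma half_twist_sig N i : 1 <= i < N ->
  braid_eq N (half_twist N ++ [:: sig i]) (sig (N - i) :: half_twist N).
Proof.
elim: N i => [|N IH] i /andP [h1 h2] //.
case: (ltnP i N) => hi.
  rewrite /= -catA.
  apply: (braid_eq_trans (v := seg 1 N.+1 ++ sig (N - i) :: half_twist N)).
    by apply: braid_eq_catl; apply: (braid_eq_widen _ (IH _ _)); rewrite ?h1.
  rewrite -cat1s catA (_ : N.+1 - i = (N - i).+1); last lia.
  apply: (@braid_eq_catr _ _ _ (sig (N - i).+1 :: seg 1 N.+1)); apply: seg1_sig; lia.
have {hi h2} eiN : i = N by lia.
subst i.
case: N IH h1 => // N _ _.
rewrite subSnn (_ : half_twist N.+2 = seg 1 N.+2 ++ seg 1 N.+1 ++ half_twist N) //.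
apply: (braid_eq_trans (v := seg 1 N.+2 ++ seg 1 N.+1 ++ sig N.+1 :: half_twist N)).
  rewrite -!catA; do 2 apply: braid_eq_catl.
  apply: (far_comm (lo := 1) (hi := N)); rewrite ?pos_word_half_twist //; lia.
rewrite -cat1s !catA -(catA _ _ [:: sig N.+1]) -seg1S //.
apply: (@braid_eq_catr _ _ _ (sig 1 :: seg 1 N.+2 ++ seg 1 N.+1)); exact: seg1_sqr.
Qed.

Lemma closure_eq_conjugate n c w w' : 1 <= n -> valid n c -> valid n w -> valid n w' ->
  braid_eq n (c ++ w) (w' ++ c) -> closure_eq n w n w'.
Proof.
move=> hn hc hw hw' H; have hc' : valid n (inv c) by rewrite valid_inv.
apply: (ce_trans (n' := n) (w' := inv c ++ w' ++ c)).
  apply: ce_braid => //; first by valid_tac.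
  apply: (braid_eq_trans (v := inv c ++ c ++ w)); last exact: braid_eq_catl.
  by rewrite catA; apply: braid_eq_sym; have := braid_eq_catr w (braid_eq_Vmul hc).
apply: (ce_trans (n' := n) (w' := w' ++ c ++ inv c)).
  by apply: (closure_eq_conjE (u := inv c) (w := w' ++ c)); try valid_tac; rewrite catA.
apply: ce_braid => //; first by valid_tac.
by have := braid_eq_catl w' (braid_eq_mulV hc); rewrite cats0.
Qed.

Definition flip N (l : letter) : letter := (N - l.1, l.2).

Lemma half_twist_conj N w : pos_word 1 N w ->
  braid_eq N (half_twist N ++ w) (map (flip N) w ++ half_twist N).
Proof.
elim: w => [|[i b] w IH] /=; first by move=> _; rewrite cats0; exact: braid_eq_refl.
case/andP=> /andP [/andP [hb hi1] hi2] hw; case: b hb => // _.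
apply: (braid_eq_trans (v := (sig (N - i) :: half_twist N) ++ w)).
  rewrite -cat1s catA; apply: braid_eq_catr; apply: half_twist_sig; exact/andP.
exact: (braid_eq_catl [:: sig (N - i)] (IH hw)).
Qed.

Lemma closure_eq_flip N w : 1 <= N -> pos_word 1 N w -> closure_eq N w N (map (flip N) w).
Proof.
move=> hN hw; apply: (closure_eq_conjugate (c := half_twist N)) => //.
- exact/pos_word_valid/pos_word_half_twist.
- exact: pos_word_valid.
- apply: pos_word_valid; move: hw; rewrite /pos_word all_map; apply: sub_all.
  by move=> [i b] /= /andP [/andP [-> h1] h2] /=; apply/andP; split; lia.
- exact: half_twist_conj.
Qed.

Lemma map_flip_up N k : k < N -> map (flip N) (up 1 k) = rev (up (N - k) k).
Proof.
elim: k => [|k IH] hk //.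
rewrite upSr map_cat IH; last lia.
rewrite (_ : N - k = (N - k.+1).+1); last lia.
by rewrite upS rev_cons -cats1 /flip /sig /= add1n.
Qed.

Lemma map_flip_segN1 N : 1 <= N -> map (flip N) (seg N 1) = seg 1 N.
Proof.
move=> hN; rewrite seg_down // seg_up // map_rev map_flip_up; last lia.
by rewrite (_ : N - (N - 1) = 1) ?revK //; lia.
Qed.

Lemma closure_eq_sig_pow_pred rho y n j : 1 <= j -> j.+1 < rho ->
  closure_eq rho (wpow [:: sig j.+1] y ++ wpow (seg 1 rho) n)
             rho (wpow [:: sig j] y ++ wpow (seg 1 rho) n).
Proof.
move=> h1 h2; apply: ce_sym; apply: (closure_eq_conjugate (c := seg 1 rho)); try valid_tac.
rewrite -catA -wpowSr wpowS !catA; apply: braid_eq_catr.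
have -> : wpow [:: sig j.+1] y = map shift (wpow [:: sig j] y) by rewrite map_wpow.
by apply: seg1_conj; apply/pos_word_wpow/pos_word_sig; lia.
Qed.

Lemma closure_eq_sig_pow_1 rho y n j : 1 <= j < rho ->
  closure_eq rho (wpow [:: sig j] y ++ wpow (seg 1 rho) n)
             rho (wpow [:: sig 1] y ++ wpow (seg 1 rho) n).
Proof.
elim: j => // -[_|j IH] /andP [_ hj]; first by apply: closure_eq_refl; valid_tac.
apply: ce_trans (closure_eq_sig_pow_pred _ _ _ _) (IH _); lia.
Qed.

Lemma closure_eq_tword2 rho m n y : 2 <= rho <= m -> m <= n ->
  closure_eq n (tword [:: (m, y); (n, rho)])
             m (wpow (seg rho 1) (n - m) ++ wpow (seg 1 m) (rho + y)).
Proof.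
case/andP=> h1 h2 h3; rewrite /tword /= cats0.
have := @closure_seg1_pow rho m (n - m) (wpow (seg 1 m) y) _ _.
rewrite subnKC // => H; apply: ce_trans (H _ _) _; try valid_tac; first lia.
apply: (closure_eq_conjE (u := wpow (seg 1 m) y)
                         (w := wpow (seg rho 1) (n - m) ++ wpow (seg 1 m) rho)); try valid_tac.
  by [].
by rewrite wpowD -!catA.
Qed.

Lemma tlink_eq_swap2 rho n y : 2 <= rho -> 2 <= n ->
  tlink_eq [:: (2, y); (n, rho)] [:: (2, y); (rho, n)].
Proof.
wlog le_rn : rho n / rho <= n.
  move=> W h1 h2; case: (leqP rho n) => h; first exact: W.
  by apply: ce_sym; apply: W => //; exact: ltnW.
move=> h1 h2; rewrite /tlink_eq /tword /tstrands /= !cats0.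
have -> : seg 1 2 = [:: sig 1] by rewrite seg_up.
have := @closure_seg1_pow rho rho (n - rho) (wpow [:: sig 1] y) _ _.
rewrite subnKC // => H; apply: ce_trans (H _ _) _; try valid_tac; first lia.
apply: (ce_trans (n' := rho) (w' := wpow [:: sig 1] y ++ wpow (seg rho 1) n)).
  apply: ce_braid; try valid_tac; apply: braid_eq_catl.
  rewrite -{2}(subnK le_rn) wpowD; apply: braid_eq_catl; apply: full_twist; lia.
apply: (ce_trans (closure_eq_flip _ _)); first lia.
  by rewrite pos_word_cat !pos_word_wpow ?pos_word_seg ?pos_word_sig //; lia.
rewrite map_cat !map_wpow map_flip_segN1; last lia.
apply: (@closure_eq_sig_pow_1 rho y n (rho - 1)); lia.
Qed.

Lemma tlink_eq_torus m n y : 2 <= m < n -> n %% m = 0 ->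
  tlink_eq [:: (m, y); (n, m)] [:: (m, n + y)].
Proof.
case/andP=> h1 h2 hmod; have /dvdnP [q hn] : m %| n by apply/eqP.
rewrite /tlink_eq /tstrands /=.
apply: ce_trans (@closure_eq_tword2 m m n y _ _) _; try (apply/andP; split); try lia.
rewrite /tword /= cats0; apply: ce_braid; try valid_tac.
have e : n - m = m * q.-1 by rewrite hn mulnC -subn1 mulnBr muln1.
rewrite (_ : n + y = (n - m) + (m + y)); last lia.
rewrite !wpowD; apply: braid_eq_catr.
rewrite e !wpowM; apply: braid_eq_wpow; apply: braid_eq_sym; apply: full_twist; lia.
Qed.

Theorem proposition3p1 :
  (* (a) *)
  (forall n d : nat, 2 <= n -> 1 <= d <= n ->
     braid_eq n (wpow (seg 1 n) d)
                (seg d 1 ++ seg 1 n ++ wpow (seg 1 n.-1) d.-1)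
  /\ braid_eq n (wpow (seg n 1) d)
                (wpow (seg n.-1 1) d.-1 ++ seg n 1 ++ seg 1 d))
  /\
  (* (b) *)
  (forall (rho m x : nat) (gamma : bword), 1 <= rho <= m -> 2 <= m + x ->
     valid m gamma ->
     closure_eq (m + x) (gamma ++ wpow (seg 1 (m + x)) rho)
                m (gamma ++ wpow (seg rho 1) x ++ wpow (seg 1 m) rho)
  /\ closure_eq (m + x) (gamma ++ wpow (seg (m + x) 1) rho)
                m (gamma ++ wpow (seg m 1) rho ++ wpow (seg 1 rho) x))
  /\
  (* (c) *)
  (forall rho m n y : nat, 2 <= rho <= m -> m <= n -> 1 <= y ->
     closure_eq n (tword [:: (m, y); (n, rho)])
                m (wpow (seg rho 1) (n - m) ++ wpow (seg 1 m) (rho + y)))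
  /\
  (forall rho n y : nat, 2 <= rho -> 2 <= n -> 1 <= y ->
     tlink_eq [:: (2, y); (n, rho)] [:: (2, y); (rho, n)])
  /\
  (forall m n y : nat, 2 <= m < n -> n %% m = 0 -> 1 <= y ->
     tlink_eq [:: (m, y); (n, m)] [:: (m, n + y)]).
Proof.
split.
  move=> n [//|d] hn /andP [_ hd].
  by split; [exact: seg1_pow | exact: segN1_pow].
split; first by move=> *; split; [exact: closure_seg1_pow | exact: closure_segN1_pow].
split; first by move=> *; exact: closure_eq_tword2.
split; first by move=> *; exact: tlink_eq_swap2.
by move=> *; exact: tlink_eq_torus.
Qed.
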